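(* Let $k$ be an infinite Brauer field and let $d\ge 1$ be an integer that is not a multiple of the characteristic of $k$. There exists a constant $C(d)$ (depending on $d$ and $k$) such that every equation $a_1x_1^d+\cdots+a_nx_n^d=1$ with $a_1,\ldots,a_n\in k$ all nonzero and $n\ge C(d)$ has a solution $(x_1,\ldots,x_n)\in k^n$.
   Context: A field $k$ is a Brauer field if for every $d\ge 1$ there is a number $N_k(d)$ such that every equation $b_1y_1^d+\cdots+b_my_m^d=0$ with $m>N_k(d)$ and $b_i\in k$ has a non-trivial solution in $k^m$. *)

From mathcomp Require Import all_boot all_order all_algebra.
Set Implicit Arguments. Unset Strict Implicit. Unset Printing Implicit Defensive.
Import GRing.Theory.
Local Open Scope ring_scope.

Definition brauer_field (k : fieldType) : Prop :=
  forall d : nat, (1 <= d)%N ->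
    exists N : nat, forall (m : nat) (b : 'I_m -> k), (N < m)%N ->
      exists y : 'I_m -> k, (exists i, y i != 0) /\
        \sum_(i < m) b i * y i ^+ d = 0.

Definition infinite_field (k : fieldType) : Prop :=
  ~ (exists s : seq k, forall x : k, x \in s).

(* Restrict the diagonal form to an affine line y_i = p_i + x r_i: this gives a
   polynomial g(x) = sum_i a_i (p_i + x r_i)^d.  One variable alone gives
   a_i (x + 1)^d, of degree d and with linear coefficient d a_i <> 0.  Given
   N + 1 such polynomials t_b of degree <= e on disjoint blocks of variables,
   where N is the Brauer bound for degree d, a nontrivial zero s of
   sum_b t_b[e] y_b^d lets one add rescaled copies u_b^d t_b(c_b x) so that the
   degree-e terms cancel.  The rescalings are chosen so that the linear
   coefficient becomes a nonzero binomial in a parameter tau, and since k is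
   infinite some tau keeps it nonzero.  After d - 1 rounds, (N + 1)^(d-1)
   variables restrict to a polynomial g_0 + g_1 x with g_1 <> 0, which takes
   the value 1. *)

From mathcomp Require Import all_boot all_order all_algebra.
From mathcomp Require Import zify.
From Stdlib Require Import Classical.
Set Implicit Arguments. Unset Strict Implicit. Unset Printing Implicit Defensive.
Import GRing.Theory.
Local Open Scope ring_scope.

Section InfiniteField.
Variables (k : fieldType) (hinf : infinite_field k).

Lemma infinite_field_uniq_seq n : exists s : seq k, uniq s /\ size s = n.
Proof.
elim: n => [|n [s [uniq_s size_s]]]; first by exists [::].
have [x /negP x_notin_s] :=
  not_all_ex_not _ (fun x => x \in s) (fun all_in => hinf (ex_intro _ s all_in)).
by exists (x :: s); rewrite /= x_notin_s uniq_s size_s.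
Qed.

Lemma infinite_field_nonroot (q : {poly k}) : q != 0 -> exists x, ~~ root q x.
Proof.
move=> q_neq0; have [s [uniq_s size_s]] := infinite_field_uniq_seq (size q).
have /allPn[x _ not_root] : ~~ all (root q) s.
  by apply/negP => /(max_poly_roots q_neq0)/(_ uniq_s); rewrite size_s ltnn.
by exists x.
Qed.

Lemma infinite_field_binomial_nonzero (c0 c1 : k) m n :
  c0 != 0 -> m != n -> exists x, c0 * x ^+ m + c1 * x ^+ n != 0.
Proof.
move=> c0_neq0 neq_mn.
have Q_neq0 : c0 *: 'X^m + c1 *: 'X^n != 0.
  apply: contra_neq c0_neq0 => /(congr1 (fun q : {poly k} => q`_m)).
  by rewrite coef0 coefD !coefZ !coefXn eqxx (negbTE neq_mn) mulr0 addr0 mulr1.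
by have [x] := infinite_field_nonroot Q_neq0; rewrite rootE !hornerE; exists x.
Qed.

End InfiniteField.

Lemma coef_XaddC1_exp (R : comNzRingType) n i :
  (('X + 1) ^+ n)`_i = 'C(n, i)%:R :> R.
Proof.
rewrite exprD1n; under eq_bigr do rewrite -scaler_nat.
rewrite coef_sumMXn (big_ord1_cond_eq _ (fun j => 'C(n, j)%:R) predT) andbT ltnS.
case: leqP => // lt_ni.
by rewrite bin_small.
Qed.

Lemma coef_comp_polyZX (R : comNzRingType) (c : R) p i :
  (p \Po (c *: 'X))`_i = c ^+ i * p`_i.
Proof.
rewrite comp_polyE; under eq_bigr do rewrite exprZn scalerA.
rewrite coef_sumMXn (big_ord1_cond_eq _ (fun j => p`_j * c ^+ j) predT) andbT.
rewrite mulrC; case: ltnP => // le_pi.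
by rewrite nth_default // mulr0.
Qed.

Lemma size_comp_polyZX (R : comNzRingType) (c : R) p :
  (size (p \Po (c *: 'X)) <= size p)%N.
Proof.
apply/leq_sizeP => i le_pi.
by rewrite coef_comp_polyZX nth_default // mulr0.
Qed.

Lemma horner_linear_eq (R : fieldType) (g : {poly R}) v :
  (size g <= 2)%N -> g`_1 != 0 -> exists x, g.[x] = v.
Proof.
move=> size_g g1_neq0; exists ((v - g`_0) / g`_1).
rewrite (horner_coef_wide _ size_g) !big_ord_recl big_ord0 /=.
by rewrite expr0 expr1 mulr1 addr0 mulrC divfK // addrC subrK.
Qed.

Section Dilation.
Variables (k : fieldType) (d : nat).

Definition dilate (u c : k) (g : {poly k}) : {poly k} :=
  u ^+ d *: (g \Po (c *: 'X)).

Lemma coef_dilate u c g i : (dilate u c g)`_i = u ^+ d * c ^+ i * g`_i.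
Proof. by rewrite coefZ coef_comp_polyZX mulrA. Qed.

Hypotheses (hinf : infinite_field k) (d_gt0 : (0 < d)%N).

Lemma dilation_sum_reduces_size m e (t : 'I_m -> {poly k}) (s : 'I_m -> k) b0 :
    (1 < e)%N -> s b0 != 0 ->
    (forall b, size (t b) <= e.+1)%N -> (forall b, (t b)`_1 != 0) ->
    \sum_b (t b)`_e * s b ^+ d = 0 ->
  exists u c : 'I_m -> k,
    (size (\sum_b dilate (u b) (c b) (t b))%R <= e)%N /\
    (\sum_b dilate (u b) (c b) (t b))`_1 != 0.
Proof.
move=> e_gt1 s_b0 size_t t1_neq0 top_sum.
pose c0 := s b0 ^+ d * (t b0)`_1.
pose c1 := \sum_(b | b != b0) s b ^+ d * (t b)`_1.
have [tau tau_ok] : exists tau, c0 * tau ^+ (e * d) + c1 * tau ^+ d != 0.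
  apply: (infinite_field_binomial_nonzero hinf).
    exact: mulf_neq0 (expf_neq0 _ s_b0) (t1_neq0 b0).
  by rewrite -[X in _ != X]mul1n eqn_mul2r negb_or -lt0n d_gt0 gtn_eqF.
(* u_b^d c_b^e = tau^(e d) for every b, so the top coefficient is tau^(e d)
   times the Brauer zero, while the linear coefficient is the binomial above. *)
pose u b := if b == b0 then s b * tau ^+ e else s b.
pose c b := if b == b0 then 1 else tau ^+ d.
have top_weight b : u b ^+ d * c b ^+ e = tau ^+ (e * d) * s b ^+ d.
  rewrite /u /c; case: eqP => _.
    by rewrite expr1n mulr1 exprMn -exprM mulrC.
  by rewrite -!exprM mulnC mulrC.
exists u, c; split.
  apply/leq_sizeP => i; rewrite leq_eqVlt coef_sum => /orP[/eqP <- | lt_ei].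
    under eq_bigr => b _
      do rewrite coef_dilate top_weight -mulrA (mulrC (s b ^+ d)).
    by rewrite -mulr_sumr top_sum mulr0.
  rewrite big1 // => b _.
  by rewrite coef_dilate nth_default ?mulr0 // (leq_trans (size_t b)).
rewrite coef_sum (bigD1 b0) //= coef_dilate /u /c eqxx expr1n mulr1.
suff -> : \sum_(b | b != b0) (dilate (u b) (c b) (t b))`_1 = c1 * tau ^+ d.
  by rewrite exprMn -exprM mulrAC.
rewrite /c1 mulr_suml; apply: eq_bigr => b /negbTE nb.
by rewrite coef_dilate /u /c nb expr1 mulrAC.
Qed.

End Dilation.

Section LineRestriction.
Variables (k : fieldType) (d : nat) (a : nat -> k).

Definition line_restriction (lo hi : nat) (g : {poly k}) : Prop :=
  exists l : nat -> {poly k},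
    (forall i, size (l i) <= 2)%N /\ \sum_(lo <= i < hi) a i *: l i ^+ d = g.

Lemma line_restriction_single lo :
  line_restriction lo lo.+1 (a lo *: ('X + 1) ^+ d).
Proof. by exists (fun=> 'X + 1); rewrite big_nat1 -polyC1 size_XaddC. Qed.

Lemma line_restriction_cat lo mid hi g h : (lo <= mid <= hi)%N ->
  line_restriction lo mid g -> line_restriction mid hi h ->
  line_restriction lo hi (g + h).
Proof.
move=> /andP[lo_mid mid_hi] [l [size_l sum_l]] [l' [size_l' sum_l']].
exists (fun i => if (i < mid)%N then l i else l' i); split.
  by move=> i; case: ifP.
rewrite (@big_cat_nat _ _ _ mid) //= -sum_l -sum_l'; congr (_ + _).
  by apply: eq_big_nat => i /andP[_ ->].
by apply: eq_big_nat => i /andP[]; rewrite leqNgt => /negbTE ->.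
Qed.

Lemma line_restriction_blocks M lo m (G : 'I_m -> {poly k}) :
    (forall b : 'I_m, line_restriction (lo + b * M) (lo + b * M + M) (G b)) ->
  line_restriction lo (lo + m * M) (\sum_b G b).
Proof.
elim: m G => [|m IHm] G restr_G.
  exists (fun=> 0); split=> [i|]; first by rewrite size_poly0.
  by rewrite big_ord0 mul0n addn0 big_geq.
rewrite big_ord_recr mulSnr addnA.
apply: line_restriction_cat (restr_G ord_max); first by rewrite !leq_addr.
exact: IHm (fun b => restr_G (widen_ord _ b)).
Qed.

Lemma line_restriction_dilate lo hi u c g :
  line_restriction lo hi g -> line_restriction lo hi (dilate d u c g).
Proof.
move=> [l [size_l <-]]; exists (fun i => u *: (l i \Po (c *: 'X))); split.
  move=> i; rewrite (leq_trans (size_scale_leq _ _)) //.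
  exact: leq_trans (size_comp_polyZX _ _) (size_l i).
have comp_sum := big_morph (comp_poly (c *: 'X)) (fun p q => comp_polyD p q _)
  (comp_poly0 _).
rewrite /dilate comp_sum scaler_sumr; apply: eq_bigr => i _.
by rewrite comp_polyZ rmorphXn exprZn !scalerA mulrC.
Qed.

Lemma line_restriction_widen lo hi hi' g : (0 < d)%N -> (lo <= hi <= hi')%N ->
  line_restriction lo hi g -> line_restriction lo hi' g.
Proof.
move=> d_gt0 le_lo_hi_hi' restr_g; rewrite -[g]addr0.
apply: line_restriction_cat le_lo_hi_hi' restr_g _.
exists (fun=> 0); split=> [i|]; first by rewrite size_poly0.
by rewrite big1 // => i _; rewrite expr0n eqn0Ngt d_gt0 scaler0.
Qed.

Lemma line_restriction_value lo hi g y : line_restriction lo hi g ->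
  exists x : nat -> k, \sum_(lo <= i < hi) a i * x i ^+ d = g.[y].
Proof.
move=> [l [_ <-]]; exists (fun i => (l i).[y]).
by rewrite horner_sum; apply: eq_bigr => i _; rewrite hornerZ horner_exp.
Qed.

End LineRestriction.

Section Reduction.
Variables (k : fieldType) (hinf : infinite_field k) (d N : nat).
Hypothesis d_neq0 : d%:R != 0 :> k.
Hypothesis brauer_N : forall (m : nat) (b : 'I_m -> k), (N < m)%N ->
  exists y : 'I_m -> k, (exists i, y i != 0) /\ \sum_(i < m) b i * y i ^+ d = 0.

Let d_gt0 : (0 < d)%N.
Proof. by rewrite lt0n; apply: contraNneq d_neq0 => ->. Qed.

Lemma nonzero_block_line_restriction j lo (a : nat -> k) : (j < d)%N ->
    (forall i, (lo <= i < lo + N.+1 ^ j)%N -> a i != 0) ->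
  exists g : {poly k}, [/\ (size g <= (d - j).+1)%N, g`_1 != 0
              & line_restriction d a lo (lo + N.+1 ^ j) g].
Proof.
elim: j lo => [|j IHj] lo lt_jd a_nz.
  exists (a lo *: ('X + 1) ^+ d); rewrite expn0 addn1; split.
  - rewrite subn0 (leq_trans (size_scale_leq _ _)) //.
    by rewrite (leq_trans (size_poly_exp_leq _ _)) // -polyC1 size_XaddC mul1n.
  - rewrite coefZ coef_XaddC1_exp bin1 mulf_neq0 //.
    by apply: a_nz; rewrite leqnn expn0 addn1 ltnSn.
  - exact: line_restriction_single.
pose M := (N.+1 ^ j)%N.
have block (b : 'I_N.+1) : exists t : {poly k},
    [/\ (size t <= (d - j).+1)%N, t`_1 != 0
       & line_restriction d a (lo + b * M) (lo + b * M + M) t].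
  apply: IHj; first exact: ltnW.
  have : (b.+1 * M <= N.+1 * M)%N by rewrite leq_mul2r ltn_ord orbT.
  rewrite mulSn => le_bM i /andP[lo_i i_hi]; apply: a_nz; rewrite expnS -/M; lia.
have [t t_spec] := fin_all_exists block.
have size_t b : (size (t b) <= (d - j).+1)%N by case: (t_spec b).
have t1_neq0 b : (t b)`_1 != 0 by case: (t_spec b).
have [s [[b0 s_b0] top_sum]] := brauer_N (fun b => (t b)`_(d - j)) (ltnSn N).
have e_gt1 : (1 < d - j)%N by lia.
have [u [c [size_sum sum1_neq0]]] :=
  dilation_sum_reduces_size hinf d_gt0 e_gt1 s_b0 size_t t1_neq0 top_sum.
exists (\sum_b dilate d (u b) (c b) (t b)); split=> //.
  by have -> : ((d - j.+1).+1 = d - j)%N by lia.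
rewrite expnS; apply: line_restriction_blocks => b.
by apply: line_restriction_dilate; case: (t_spec b).
Qed.

End Reduction.

Theorem corollary1p5 (k : fieldType) (hinf : infinite_field k)
  (hbr : brauer_field k) (d : nat) (hd : (1 <= d)%N)
  (hchar : forall p : nat, p \in [pchar k] -> ~~ (p %| d)%N) :
  exists C : nat, forall (n : nat) (a : 'I_n -> k),
    (C <= n)%N -> (forall i, a i != 0) ->
    exists x : 'I_n -> k, \sum_(i < n) a i * x i ^+ d = 1.
Proof.
have d_neq0 : d%:R != 0 :> k.
  apply/negP => d_eq0; have [p p_char] := natf0_pchar hd d_eq0.
  by have := hchar p p_char; rewrite (dvdn_pcharf p_char) d_eq0.
have [N brauer_N] := hbr d hd.
exists (N.+1 ^ d.-1)%N => n a le_Cn a_nz.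
pose A i := if insub i is Some i' then a i' else 0.
have [||g [size_g g1_neq0 restr_g]] :=
  nonzero_block_line_restriction hinf d_neq0 brauer_N (j := d.-1) (lo := 0) (a := A).
- by rewrite prednK.
- move=> i /andP[_ lt_iC].
  by rewrite /A (insubT (fun m => m < n)%N (leq_trans lt_iC le_Cn)).
have size_g2 : (size g <= 2)%N by rewrite (leq_trans size_g) //; lia.
have [y g_y] := horner_linear_eq 1 size_g2 g1_neq0.
have [x sum_x] := line_restriction_value y
  (line_restriction_widen hd (le_Cn : (0 <= _ <= n)%N) restr_g).
exists (fun i => x i); rewrite -g_y -sum_x big_mkord.
by apply: eq_bigr => i _; rewrite /A valK.
Qed.
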